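(* Consider the system $\frac{dT}{dt}=s+r_TT\left(1-\frac{T+I}{T_{\max}}\right)-dT-\frac{bTV}{T+I}$, $\frac{dI}{dt}=r_II\left(1-\frac{T+I}{T_{\max}}\right)+\frac{bTV}{T+I}-\delta I$, $\frac{dV}{dt}=\rho R^*I-cV-\frac{bTV}{T+I}$, with $\rho$ as bifurcation parameter. There exist parameter values for which $\delta>r_I(1-p_0/T_{\max})$, ${\cal R}_0=1$, zero is a simple eigenvalue of the Jacobian at the DFE with all other eigenvalues having negative real parts, $b_{VW}>0$ and $a>0$; and there exist parameter values for which the same hold but with $a<0$. Thus the system exhibits both backward and forward bifurcations.
   Context: Parameters $s,r_T,T_{\max},d,b,r_I,\delta,\rho,R^*,c$ are positive constants. Let $p_0=\left(r_T-d+\sqrt{(r_T-d)^2+\frac{4sr_T}{T_{\max}}}\right)\frac{T_{\max}}{2r_T}$, $a_{11}=\sqrt{(r_T-d)^2+\frac{4sr_T}{T_{\max}}}$, $a_{12}=\frac{p_0r_T}{T_{\max}}$. The disease-free equilibrium (DFE) is $x_0=(T,I,V)=(p_0,0,0)$ (independent of $\rho$); $I,V$ are the infected variables. For $\delta>r_I(1-p_0/T_{\max})$, ${\cal R}_0=\frac{b\rho R^*}{(b+c)\left(\delta-r_I(1-\frac{p_0}{T_{\max}})\right)}$. Ordering variables as $(T,I,V)$ and writing $f=(f_1,f_2,f_3)$ for the right-hand side, let $v=(0,b+c,b)$ and $w=(-a_{12}(b+c)-b\rho R^*,\,a_{11}(b+c),\,a_{11}\rho R^* )$ (left and right null vectors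 of the Jacobian at the DFE when ${\cal R}_0=1$). Define $a=\frac12\sum_{i,j,k}v_iw_jw_k\frac{\partial^2f_i}{\partial x_j\partial x_k}(x_0)$ and $b_{VW}=\sum_{i,j}v_iw_j\frac{\partial^2f_i}{\partial x_j\partial\rho}(x_0)$ (van den Driessche–Watmough coefficients; $a>0,b_{VW}>0$ indicates a backward bifurcation and $a<0,b_{VW}>0$ a forward bifurcation at ${\cal R}_0=1$). *)

From HB Require Import structures.
From mathcomp Require Import all_boot all_order all_algebra.
From mathcomp Require Import all_classical all_reals all_analysis.
From mathcomp Require Import Rstruct Rstruct_topology complex.
Set Implicit Arguments. Unset Strict Implicit. Unset Printing Implicit Defensive.
Import Order.TTheory GRing.Theory Num.Theory.
Local Open Scope ring_scope.

Notation R := Rdefinitions.R.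

Record params := Params {
  p_s : R; p_rT : R; p_Tmax : R; p_d : R; p_b : R;
  p_rI : R; p_delta : R; p_rho : R; p_Rstar : R; p_c : R }.

Definition params_pos (p : params) : Prop :=
  0 < p_s p /\ 0 < p_rT p /\ 0 < p_Tmax p /\ 0 < p_d p /\ 0 < p_b p /\
  0 < p_rI p /\ 0 < p_delta p /\ 0 < p_rho p /\ 0 < p_Rstar p /\ 0 < p_c p.

Definition with_rho (p : params) (r : R) : params :=
  Params (p_s p) (p_rT p) (p_Tmax p) (p_d p) (p_b p)
         (p_rI p) (p_delta p) r (p_Rstar p) (p_c p).

Definition state := 'I_3 -> R.
Definition xT (x : state) : R := x (inord 0).
Definition xI (x : state) : R := x (inord 1).
Definition xV (x : state) : R := x (inord 2).

Definition rhs (p : params) (i : 'I_3) (x : state) : R :=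
  let T := xT x in let I := xI x in let V := xV x in
  let inf := p_b p * T * V / (T + I) in
  if val i == 0%N then
    p_s p + p_rT p * T * (1 - (T + I) / p_Tmax p) - p_d p * T - inf
  else if val i == 1%N then
    p_rI p * I * (1 - (T + I) / p_Tmax p) + inf - p_delta p * I
  else
    p_rho p * p_Rstar p * I - p_c p * V - inf.

Definition shift (x : state) (j : 'I_3) (h : R) : state :=
  fun k => x k + (if k == j then h else 0).
Definition partial (j : 'I_3) (g : state -> R) (x : state) : R :=
  derive1 (fun h : R^o => (g (shift x j h) : R^o)) 0.

Definition p0 (p : params) : R :=
  (p_rT p - p_d p + Num.sqrt ((p_rT p - p_d p) ^+ 2 + 4 * p_s p * p_rT p / p_Tmax p))
  * p_Tmax p / (2 * p_rT p).
Definition a11 (p : params) : R :=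
  Num.sqrt ((p_rT p - p_d p) ^+ 2 + 4 * p_s p * p_rT p / p_Tmax p).
Definition a12 (p : params) : R := p0 p * p_rT p / p_Tmax p.

Definition dfe (p : params) : state :=
  fun k => if val k == 0%N then p0 p else 0.

Definition R0 (p : params) : R :=
  p_b p * p_rho p * p_Rstar p /
  ((p_b p + p_c p) * (p_delta p - p_rI p * (1 - p0 p / p_Tmax p))).

Definition jac (p : params) : 'M[R]_3 :=
  \matrix_(i, j) partial j (rhs p i) (dfe p).

Definition zero_simple_rest_stable (A : 'M[R]_3) : Prop :=
  let q := map_poly (real_complex R) (char_poly A) in
  mup 0 q = 1%N /\ forall z : R[i], root q z -> z != 0 -> complex.Re z < 0.

(* Left and right null vectors v, w. *)
Definition vvec (p : params) (i : 'I_3) : R :=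
  if val i == 0%N then 0 else if val i == 1%N then p_b p + p_c p else p_b p.
Definition wvec (p : params) (i : 'I_3) : R :=
  if val i == 0%N then - a12 p * (p_b p + p_c p) - p_b p * p_rho p * p_Rstar p
  else if val i == 1%N then a11 p * (p_b p + p_c p)
  else a11 p * p_rho p * p_Rstar p.

(* van den Driessche--Watmough coefficients. *)
Definition coef_a (p : params) : R :=
  2^-1 * \sum_(i < 3) \sum_(j < 3) \sum_(k < 3)
    vvec p i * wvec p j * wvec p k *
    partial k (partial j (rhs p i)) (dfe p).

Definition coef_b (p : params) : R :=
  \sum_(i < 3) \sum_(j < 3)
    vvec p i * wvec p j *
    derive1 (fun r : R^o => (partial j (rhs (with_rho p r) i) (dfe p) : R^o)) (p_rho p).

Definition bif_conditions (p : params) : Prop :=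
  [/\ params_pos p,
      p_delta p > p_rI p * (1 - p0 p / p_Tmax p),
      R0 p = 1,
      zero_simple_rest_stable (jac p)
    & coef_b p > 0].

From Pilot Require Import Defs.
From mathcomp Require Import all_boot all_order all_algebra.
From mathcomp Require Import all_classical all_reals all_analysis.
From mathcomp Require Import Rstruct Rstruct_topology complex.
From mathcomp Require Import ring lra.
Import Order.TTheory GRing.Theory Num.Theory.
Local Open Scope ring_scope.

(* At the disease-free equilibrium both van den Driessche-Watmough coefficients
   have closed forms: b_VW = b R* a11 (b + c) is positive for all positive
   parameters, while a is affine in r_I. Taking s = r_T = T_max = d = b = c = R* = 1,
   delta = 2 and rho = 4 gives p0 = T_max, so the DFE (1, 0, 0), R0 = 1 and the Jacobian
   (eigenvalues 0, -2, -4) do not depend on r_I, whereas a = 16 r_I - 32 changes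
   sign at r_I = 2. *)

Definition has_derivative (f : R -> R) (x d : R) :=
  is_derive (x : R^o) (1 : R^o) (f : R^o -> R^o) (d : R^o).

Lemma has_derivative_cst (c x : R) : has_derivative (fun=> c) x 0.
Proof. exact: is_derive_cst. Qed.

Lemma has_derivative_id (x : R) : has_derivative id x 1.
Proof. exact: is_derive_id. Qed.

Lemma has_derivativeD f g x a b : has_derivative f x a -> has_derivative g x b ->
  has_derivative (fun h => f h + g h) x (a + b).
Proof. exact: is_deriveD. Qed.

Lemma has_derivativeN f x a : has_derivative f x a ->
  has_derivative (fun h => - f h) x (- a).
Proof. exact: is_deriveN. Qed.

Lemma has_derivativeM f g x a b : has_derivative f x a -> has_derivative g x b ->
  has_derivative (fun h => f h * g h) x (f x * b + g x * a).
Proof. exact: is_deriveM. Qed.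

Lemma has_derivativeV f x a : f x != 0 -> has_derivative f x a ->
  has_derivative (fun h => (f h)^-1) x (- a / f x ^+ 2).
Proof.
move=> fx0 fa; apply: is_derive_eq; first exact: (is_deriveV fx0 fa).
by change (- f x ^- 2 * a = - a / f x ^+ 2); rewrite mulNr mulrC mulNr.
Qed.

Lemma derive1_has_derivative f x d : has_derivative f x d ->
  derive1 (f : R^o -> R^o) x = d.
Proof. by move=> fd; rewrite derive1E; apply: derive_val. Qed.

Lemma derive1_near_eq (f g : R -> R) (x : R) :
  (\forall h \near (x : R^o), f h = g h) ->
  derive1 (f : R^o -> R^o) x = derive1 (g : R^o -> R^o) x.
Proof. by move=> fg; rewrite !derive1E; apply: near_eq_derive. Qed.

Ltac solve_nonzero :=
  cbv beta; rewrite ?mul0r ?addr0 ?mulr0 ?add0r; try assumption;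
  try by rewrite ?mulf_neq0.

Ltac solve_derivative := first
  [ eapply has_derivative_cst
  | eapply has_derivative_id
  | eapply has_derivativeD; [solve_derivative | solve_derivative]
  | eapply has_derivativeN; solve_derivative
  | eapply has_derivativeM; [solve_derivative | solve_derivative]
  | eapply has_derivativeV; [solve_nonzero | solve_derivative] ].

Definition unit_coord (j : 'I_3) (n : nat) : R := if val j == n then 1 else 0.

Lemma shift_inord (x : state) (j : 'I_3) (h : R) (n : nat) : (n < 3)%N ->
  Defs.shift x j h (inord n) = x (inord n) + h * unit_coord j n.
Proof.
move=> n_lt3; rewrite /Defs.shift /unit_coord.
have -> : ((inord n : 'I_3) == j) = (val j == n) by rewrite -val_eqE /= inordK // eq_sym.
by case: (_ == _); rewrite ?mulr1 ?mulr0.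
Qed.

Definition rhs_TIV (p : params) (n : nat) (T I V : R) : R :=
  let inf := p_b p * T * V / (T + I) in
  if n == 0%N then
    p_s p + p_rT p * T * (1 - (T + I) / p_Tmax p) - p_d p * T - inf
  else if n == 1%N then
    p_rI p * I * (1 - (T + I) / p_Tmax p) + inf - p_delta p * I
  else
    p_rho p * p_Rstar p * I - p_c p * V - inf.

Lemma rhsE p i x : rhs p i x = rhs_TIV p (val i) (xT x) (xI x) (xV x).
Proof. by []. Qed.

Definition infection_dir (p : params) (T I V u1 u2 u3 : R) : R :=
  p_b p * (u1 * V + T * u3) / (T + I) - p_b p * T * V * (u1 + u2) / ((T + I) * (T + I)).

Definition rhs_dir (p : params) (n : nat) (T I V u1 u2 u3 : R) : R :=
  if n == 0%N then
    p_rT p * u1 * (1 - (T + I) / p_Tmax p) - p_rT p * T * (u1 + u2) / p_Tmax p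
      - p_d p * u1 - infection_dir p T I V u1 u2 u3
  else if n == 1%N then
    p_rI p * u2 * (1 - (T + I) / p_Tmax p) - p_rI p * I * (u1 + u2) / p_Tmax p
      + infection_dir p T I V u1 u2 u3 - p_delta p * u2
  else p_rho p * p_Rstar p * u2 - p_c p * u3 - infection_dir p T I V u1 u2 u3.

Lemma partial_rhs p i j x : p_Tmax p != 0 -> xT x + xI x != 0 ->
  partial j (rhs p i) x =
  rhs_dir p (val i) (xT x) (xI x) (xV x) (unit_coord j 0) (unit_coord j 1) (unit_coord j 2).
Proof.
move=> Tmax_neq0 TI_neq0; rewrite /partial.
have -> : (fun h : R^o => (rhs p i (Defs.shift x j h) : R^o)) =
    (fun h => rhs_TIV p (val i) (xT x + h * unit_coord j 0)
                (xI x + h * unit_coord j 1) (xV x + h * unit_coord j 2)).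
  by apply: funext => h; rewrite rhsE /xT /xI /xV !shift_inord.
move: (unit_coord j 0) (unit_coord j 1) (unit_coord j 2) => u1 u2 u3.
move: (xT x) (xI x) (xV x) TI_neq0 => T I V TI_neq0.
case: i => [[|[|[|?]]] ?] //=; rewrite /rhs_TIV /rhs_dir /infection_dir /=.
all: apply: etrans; [apply: derive1_has_derivative; solve_derivative|].
all: cbv beta; rewrite ?mul0r ?addr0; field.
all: by rewrite ?TI_neq0 ?Tmax_neq0 ?mulf_neq0.
Qed.

Lemma xT_dfe p : xT (dfe p) = p0 p. Proof. by rewrite /xT /dfe /= inordK. Qed.
Lemma xI_dfe p : xI (dfe p) = 0. Proof. by rewrite /xI /dfe /= inordK. Qed.
Lemma xV_dfe p : xV (dfe p) = 0. Proof. by rewrite /xV /dfe /= inordK. Qed.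

Lemma partial_rhs_dfe p i j : 0 < p0 p -> p_Tmax p != 0 ->
  partial j (rhs p i) (dfe p) =
  rhs_dir p (val i) (p0 p) 0 0 (unit_coord j 0) (unit_coord j 1) (unit_coord j 2).
Proof.
move=> p0_pos Tmax_neq0.
by rewrite partial_rhs // xT_dfe ?xI_dfe ?xV_dfe // addr0 gt_eqF.
Qed.

Definition rhs_dir2_dfe (p : params) (n : nat) (u1 u2 u3 w1 w2 w3 : R) : R :=
  if n == 0%N then
    - 2 * p_rT p / p_Tmax p * u1 * w1 - p_rT p / p_Tmax p * (u1 * w2 + u2 * w1)
    + p_b p / p0 p * (u2 * w3 + u3 * w2)
  else if n == 1%N then
    - p_rI p / p_Tmax p * (u1 * w2 + u2 * w1) - 2 * p_rI p / p_Tmax p * u2 * w2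
    - p_b p / p0 p * (u2 * w3 + u3 * w2)
  else p_b p / p0 p * (u2 * w3 + u3 * w2).

Lemma partial2_rhs_dfe p i j k : 0 < p0 p -> p_Tmax p != 0 ->
  partial k (partial j (rhs p i)) (dfe p) =
  rhs_dir2_dfe p (val i) (unit_coord j 0) (unit_coord j 1) (unit_coord j 2)
    (unit_coord k 0) (unit_coord k 1) (unit_coord k 2).
Proof.
move=> p0_pos Tmax_neq0; rewrite {1}/partial.
(* [partial_rhs] needs T + I != 0, which holds only near the DFE. *)
rewrite (@derive1_near_eq _ (fun h => rhs_dir p (val i)
  (p0 p + h * unit_coord k 0) (0 + h * unit_coord k 1) (0 + h * unit_coord k 2)
  (unit_coord j 0) (unit_coord j 1) (unit_coord j 2))); last first.
  apply: filterS (nbhs0_lt p0_pos) => h; rewrite ltr_norml => /andP[h_gt h_lt].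
  rewrite partial_rhs // /xT /xI /xV !shift_inord // -/(xT _) -/(xI _) -/(xV _)
    xT_dfe xI_dfe ?xV_dfe //.
  case: k => [[|[|[|?]]] ?] //; rewrite /unit_coord /= ?mulr1 ?mulr0 ?addr0 ?add0r gt_eqF //;
  lra.
move: (unit_coord j 0) (unit_coord j 1) (unit_coord j 2) => u1 u2 u3.
have p0_neq0 : p0 p != 0 by rewrite gt_eqF.
case: k => [[|[|[|?]]] ?] //; rewrite /unit_coord /=.
all: case: i => [[|[|[|?]]] ?] //=; rewrite /rhs_dir2_dfe /rhs_dir /infection_dir /=.
all: move: (p0 p) p0_neq0 => P0 P0_neq0.
all: apply: etrans; [apply: derive1_has_derivative; solve_derivative|].
all: cbv beta; rewrite ?mul0r ?addr0 ?mulr0 ?mulr1 ?add0r; field.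
all: by rewrite ?P0_neq0 ?Tmax_neq0 ?mulf_neq0.
Qed.

Lemma derive_rho_partial_rhs_dfe p i j : 0 < p0 p -> p_Tmax p != 0 ->
  derive1 (fun r : R^o => (partial j (rhs (with_rho p r) i) (dfe p) : R^o)) (p_rho p)
  = if val i == 2%N then p_Rstar p * unit_coord j 1 else 0.
Proof.
move=> p0_pos Tmax_neq0.
have -> : (fun r : R^o => (partial j (rhs (with_rho p r) i) (dfe p) : R^o)) =
    (fun r => rhs_dir (with_rho p r) (val i) (p0 p) 0 0
                (unit_coord j 0) (unit_coord j 1) (unit_coord j 2)).
  by apply: funext => r; rewrite partial_rhs_dfe.
move: (unit_coord j 0) (unit_coord j 1) (unit_coord j 2) (p0 p) (gt_eqF p0_pos).
move=> u1 u2 u3 P0 P0_neq0.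
case: i => [[|[|[|?]]] ?] //=; rewrite /rhs_dir /infection_dir /=.
all: apply: etrans; [apply: derive1_has_derivative; solve_derivative|].
all: by cbv beta; rewrite ?mul0r ?addr0 ?mulr0 ?mulr1 ?add0r; try field.
Qed.

Lemma coef_aE p : 0 < p0 p -> p_Tmax p != 0 ->
  coef_a p = - a11 p * (p_b p + p_c p) *
    (p_rI p * (p_b p + p_c p) / p_Tmax p *
       ((a11 p - a12 p) * (p_b p + p_c p) - p_b p * p_rho p * p_Rstar p)
     + p_b p * p_c p * a11 p * p_rho p * p_Rstar p / p0 p).
Proof.
move=> p0_pos Tmax_neq0; rewrite /coef_a.
under eq_bigr => i _ do under eq_bigr => j _ do under eq_bigr => k _
  do rewrite partial2_rhs_dfe //.
rewrite !big_ord_recl !big_ord0 /= /vvec /wvec /rhs_dir2_dfe /unit_coord /=.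
by field; rewrite Tmax_neq0 gt_eqF.
Qed.

Lemma coef_bE p : 0 < p0 p -> p_Tmax p != 0 ->
  coef_b p = p_b p * p_Rstar p * a11 p * (p_b p + p_c p).
Proof.
move=> p0_pos Tmax_neq0; rewrite /coef_b.
under eq_bigr => i _ do under eq_bigr => j _ do rewrite derive_rho_partial_rhs_dfe //.
rewrite !big_ord_recl !big_ord0 /= /vvec /wvec /unit_coord /=.
by ring.
Qed.

Lemma abs_lt_a11 p : params_pos p -> `|p_rT p - p_d p| < a11 p.
Proof.
case=> s_gt0 [rT_gt0 [Tmax_gt0 _]].
have e_gt0 : 0 < 4 * p_s p * p_rT p / p_Tmax p by rewrite divr_gt0 ?mulr_gt0 ?ltr0n.
rewrite /a11 -sqrtr_sqr ltr_sqrt ?ltrDl //.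
exact: ltr_wpDl (sqr_ge0 _) e_gt0.
Qed.

Lemma a11_gt0 p : params_pos p -> 0 < a11 p.
Proof. by move=> /abs_lt_a11; apply: le_lt_trans. Qed.

Lemma p0_gt0 p : params_pos p -> 0 < p0 p.
Proof.
move=> pos; have := abs_lt_a11 _ pos; case: pos => _ [rT_gt0 [Tmax_gt0 _]].
rewrite ltr_norml => /andP[lt_a11 _].
by rewrite /p0 -/(a11 p) divr_gt0 ?mulr_gt0 //; lra.
Qed.

Lemma coef_b_gt0 p : params_pos p -> 0 < coef_b p.
Proof.
move=> pos; have := a11_gt0 _ pos; have := p0_gt0 _ pos.
case: pos => _ [_ [Tmax_gt0 [_ [b_gt0 [_ [_ [_ [Rstar_gt0 c_gt0]]]]]]]] p0_pos a11_pos.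
by rewrite coef_bE ?gt_eqF // !mulr_gt0 // addr_gt0.
Qed.

Lemma zero_simple_rest_stable_char_poly (A : 'M[R]_3) (a b : R) : 0 < a -> 0 < b ->
  char_poly A = 'X * ('X + a%:P) * ('X + b%:P) -> zero_simple_rest_stable A.
Proof.
move=> a_gt0 b_gt0 charA; rewrite /zero_simple_rest_stable charA.
rewrite !rmorphM /= !map_polyXaddC map_polyX.
have root_XaddC c : 0 < c -> ~~ root ('X + (real_complex R c)%:P) 0.
  move=> c_gt0; rewrite /root !hornerE; apply/eqP; case=> /eqP.
  by rewrite gt_eqF.
split.
  rewrite mupMl ?root_XaddC // mupMl ?root_XaddC //.
  by rewrite -[X in mup _ X]subr0 -[X in mup _ (_ - X)]polyC0 -[X in mup _ X]expr1
    mup_XsubCX eqxx.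
move=> z; rewrite !rootM => /orP[/orP[]|].
- by rewrite /root hornerX => ->.
- by rewrite /root !hornerE addr_eq0 => /eqP -> _ /=; rewrite oppr_lt0.
- by rewrite /root !hornerE addr_eq0 => /eqP -> _ /=; rewrite oppr_lt0.
Qed.

Definition example_params (rI : R) : params := Params 1 1 1 1 1 rI 2 4 1 1.

Lemma a11_example rI : a11 (example_params rI) = 2.
Proof.
rewrite /a11 /= subrr expr0n /= add0r !mulr1 invr1 mulr1.
by rewrite (_ : 4 = 2 ^+ 2) ?sqrtr_sqr ?ger0_norm // expr2 -natrM.
Qed.

Lemma p0_example rI : p0 (example_params rI) = 1.
Proof. by rewrite /p0 -/(a11 _) a11_example /=; field. Qed.

Lemma a12_example rI : a12 (example_params rI) = 1.
Proof. by rewrite /a12 p0_example /=; field. Qed.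

Lemma coef_a_example rI : coef_a (example_params rI) = 16 * rI - 32.
Proof.
rewrite coef_aE ?p0_example ?a11_example ?a12_example /= ?oner_neq0 //.
by field.
Qed.

Definition jac_example_rows : seq (seq R) :=
  [:: [:: -2; -1; -1]; [:: 0; -2; 1]; [:: 0; 4; -2]].

Lemma partial_rhs_dfe_example rI (i j : 'I_3) :
  partial j (rhs (example_params rI) i) (dfe (example_params rI)) =
  nth 0 (nth [::] jac_example_rows i) j.
Proof.
rewrite partial_rhs_dfe ?p0_example /= ?oner_neq0 //.
by case: i => [[|[|[|?]]] ?] //; case: j => [[|[|[|?]]] ?] //;
  rewrite /rhs_dir /infection_dir /unit_coord /=; field.
Qed.

Lemma char_poly_jac_example rI :
  char_poly (jac (example_params rI)) = 'X * ('X + 2%:P) * ('X + 4%:P).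
Proof.
rewrite /char_poly /char_poly_mx (expand_det_col _ ord0) !big_ord_recl big_ord0.
rewrite /cofactor !(expand_det_col _ ord0) !big_ord_recl !big_ord0 /cofactor.
by rewrite !det_mx11 !mxE !partial_rhs_dfe_example /= !polyCN; ring.
Qed.

Lemma bif_conditions_example rI : 0 < rI -> bif_conditions (example_params rI).
Proof.
move=> rI_gt0.
have pos : params_pos (example_params rI) by rewrite /params_pos /= ltr01 ltr0n.
split=> //=.
- by rewrite p0_example divr1 subrr mulr0 ltr0n.
- by rewrite /R0 /= p0_example divr1 subrr mulr0 subr0; field.
- exact: zero_simple_rest_stable_char_poly (char_poly_jac_example rI).
- exact: coef_b_gt0.
Qed.

Theorem theorem3 :
  (exists p : params, bif_conditions p /\ coef_a p > 0) /\
  (exists p : params, bif_conditions p /\ coef_a p < 0).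
Proof.
split.
- exists (example_params 8); rewrite coef_a_example.
  by split; [apply: bif_conditions_example; rewrite ltr0n | lra].
- exists (example_params 1); rewrite coef_a_example.
  by split; [apply: bif_conditions_example; rewrite ltr01 | lra].
Qed.
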